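(* Let $\Gamma$ be a connected highly-regular graph with CAM $C=[c_{i,j}]_{1\le i,j\le m}$ and diameter $D=\operatorname{diam}(\Gamma)$, with chosen partitions $V_1(u)=\{u\},\dots,V_m(u)$ for each vertex $u$, and let $S_0,\dots,S_D$ be nonempty subsets of $\{1,\dots,m\}$ with $D_i(u)=\bigsqcup_{t\in S_i}V_t(u)$ for every vertex $u$ and every $i$. For $i\in\{1,\dots,D\}$ define $b_{i-1}^{\max}=\max\{\sum_{t\in S_i}c_{t,l}: l\in S_{i-1}\}$ and $c_i^{\max}=\max\{\sum_{t\in S_{i-1}}c_{t,l}: l\in S_i\}$. Assume $\Gamma$ satisfies: $(\star)$ for every vertex $u$, every $i\in\{0,1,\dots,D-1\}$ and every $x\in D_i(u)$, the set $D_1(x)\cap D_{i+1}(u)$ is nonempty. Then for all integers $i\ge1$, $j\ge 0$ with $i+j\le D$, we have $c_i^{\max}\le b_j^{\max}$.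
   Context: All graphs are finite, simple; $d(u,v)$ is graph distance and $D_i(u)=\{v:d(u,v)=i\}$. A graph $\Gamma$ of order $n$ is highly-regular with collapsed adjacency matrix (CAM) $C=[c_{i,j}]_{1\le i,j\le m}$, where $2\le m<n$ (the value $m=n$ is allowed only when $n=2$), if for every vertex $u$ there is a partition of $V(\Gamma)$ into nonempty sets $V_1(u)=\{u\},V_2(u),\dots,V_m(u)$ such that for all $i,j$, every vertex $y\in V_j(u)$ is adjacent to exactly $c_{i,j}$ vertices of $V_i(u)$. *)

From mathcomp Require Import all_boot.
Set Implicit Arguments. Unset Strict Implicit. Unset Printing Implicit Defensive.

Fixpoint walk (T : finType) (e : rel T) (k : nat) (u v : T) : bool :=
  match k with
  | 0 => u == v
  | k'.+1 => [exists w, e u w && walk e k' w v]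
  end.

(* Distance sphere D_i(u) = { v : d(u,v) = i }:
   v is reachable by a walk of length i but by no shorter walk. *)
Definition sphere (T : finType) (e : rel T) (i : nat) (u : T) : {set T} :=
  [set v | walk e i u v && [forall j : 'I_i, ~~ walk e j u v]].

Definition bmax (m : nat) (C : 'I_m -> 'I_m -> nat) (S : nat -> {set 'I_m})
  (j : nat) : nat :=
  \max_(l in S j) \sum_(t in S j.+1) C t l.

Definition cmax (m : nat) (C : 'I_m -> 'I_m -> nat) (S : nat -> {set 'I_m})
  (i : nat) : nat :=
  \max_(l in S i) \sum_(t in S i.-1) C t l.

(* Fix l in S_i and a vertex w in V_l(v) for some v, so that w is in D_i(v).
   Condition (star) lets us walk j steps outward from w to some u in
   D_(i+j)(v); by the triangle inequality d(u, w) = j, so w lies in V_l'(u)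
   for some l' in S_j.  Again by the triangle inequality every neighbour of w
   in D_(i-1)(v) lies in D_(j+1)(u).  Counting these neighbours with the CAM,
   taken at v and at u, gives c_i(l) <= b_j(l') <= b_j^max. *)

From mathcomp Require Import all_boot.

Set Implicit Arguments.
Unset Strict Implicit.
Unset Printing Implicit Defensive.

Section Walks.
Variables (T : finType) (e : rel T).

Lemma walk_cat a b u v w : walk e a u v -> walk e b v w -> walk e (a + b) u w.
Proof.
elim: a u => [|a IH] u /=; first by move=> /eqP ->.
move=> /existsP [x /andP [eux wxv]] wvw; apply/existsP; exists x.
by rewrite eux IH.
Qed.

Lemma walk1 u v : walk e 1 u v = e u v.
Proof.
apply/existsP/idP => [[x /andP [euv /eqP <-]] //|euv].
by exists v; rewrite euv eqxx.
Qed.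

Lemma walk_rcons k u v w : walk e k u v -> e v w -> walk e k.+1 u w.
Proof. by move=> wuv evw; rewrite -addn1; apply: walk_cat wuv _; rewrite walk1. Qed.

Lemma sphereP i u v :
  reflect (walk e i u v /\ forall k, k < i -> ~~ walk e k u v)
          (v \in sphere e i u).
Proof.
rewrite inE; apply: (iffP andP) => [[wuv /forallP short]|[wuv short]].
  by split=> // k ki; exact: (short (Ordinal ki)).
by split=> //; apply/forallP => k; apply: short.
Qed.

Lemma walk_outward (D : nat)
    (star : forall u i x, i < D -> x \in sphere e i u ->
              exists y, y \in sphere e 1 x :&: sphere e i.+1 u)
    a i x k :
  i + k <= D -> x \in sphere e i a ->
  exists2 y, y \in sphere e (i + k) a & walk e k x y.
Proof.
move=> ikD xi; elim: k ikD => [|k IH] ikD.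
  by exists x; rewrite ?addn0 /=.
rewrite addnS in ikD; have [y yik wxy] := IH (ltnW ikD).
have [z /setIP [/sphereP [wyz _] zik]] := star a _ y ikD yik.
by exists z; [rewrite addnS | apply: walk_rcons wxy _; rewrite -walk1].
Qed.

Hypothesis e_sym : symmetric e.

Lemma walk_sym k u v : walk e k u v -> walk e k v u.
Proof.
elim: k u => [|k IH] u /=; first by rewrite eq_sym.
move=> /existsP [x /andP [eux wxv]].
by apply: walk_rcons (IH _ wxv) _; rewrite e_sym.
Qed.

(* The triangle inequality d(a, u) <= d(a, z) + d(z, u), in the form that
   pins down d(u, z) when the walks through z realise the distance from a. *)
Lemma sphere_of_walks p q a u z :
  u \in sphere e (p + q) a -> walk e p a z -> walk e q u z ->
  z \in sphere e q u.
Proof.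
move=> /sphereP [_ far] waz wuz; apply/sphereP; split=> // k kq.
apply: contra (far (p + k) _) => [wuz'|]; last by rewrite ltn_add2l.
exact: walk_cat waz (walk_sym wuz').
Qed.

Lemma subset_adj_sphere p q a u w :
  u \in sphere e (p + q.+1) a -> walk e q u w ->
  [set x in sphere e p a | e x w] \subset [set x in sphere e q.+1 u | e x w].
Proof.
move=> ua wuw; apply/subsetP => z /setIdP [/sphereP [waz _] ezw].
rewrite inE ezw andbT; apply: sphere_of_walks ua waz _.
by apply: walk_rcons wuw _; rewrite e_sym.
Qed.

End Walks.

Section Partition.
Variables (T : finType) (m : nat) (e : rel T).
Variables (V : T -> 'I_m -> {set T}) (C : 'I_m -> 'I_m -> nat).
Hypothesis V_disj : forall u t t' x, x \in V u t -> x \in V u t' -> t = t'.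
Hypothesis V_cam : forall u (i j : 'I_m) y, y \in V u j ->
  #|[set x in V u i | e x y]| = C i j.

Lemma card_adj_bigcup v w l (A : {set 'I_m}) : w \in V v l ->
  #|[set x in \bigcup_(t in A) V v t | e x w]| = \sum_(t in A) C t l.
Proof.
move=> wl; pose part x := odflt l [pick t | x \in V v t].
have partE x t : x \in V v t -> part x = t.
  move=> xt; rewrite /part; case: pickP => [t' /V_disj/(_ xt) //|/(_ t)].
  by rewrite xt.
rewrite -sum1_card (partition_big part (mem A)); last first.
  by move=> x; rewrite inE => /andP [/bigcupP [t tA /partE ->]].
apply: eq_bigr => t tA; rewrite -(V_cam t wl) -sum1_card.
apply: eq_bigl => x; rewrite !inE; apply/idP/idP.
  move=> /andP [/andP [/bigcupP [t' _ xt'] ->]].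
  by rewrite (partE _ _ xt') => /eqP <-; rewrite xt'.
move=> /andP [xt ->]; rewrite (partE _ _ xt) eqxx !andbT.
by apply/bigcupP; exists t.
Qed.

End Partition.

Theorem proposition6p2
  (T : finType) (e : rel T)
  (e_sym : symmetric e) (e_irr : irreflexive e)
  (m : nat) (V : T -> 'I_m -> {set T}) (C : 'I_m -> 'I_m -> nat)
  (* highly-regular with CAM C, partitions V_1(u) = {u}, ..., V_m(u)
     (index t : 'I_m corresponds to t+1 in the paper) *)
  (m_ge2 : 2 <= m)
  (m_lt : m < #|T| \/ (m = #|T| /\ #|T| = 2))
  (V_first : forall (u : T) (t : 'I_m), val t = 0 -> V u t = [set u])
  (V_nonempty : forall u t, V u t != set0)
  (V_cover : forall u x, exists t, x \in V u t)
  (V_disj : forall u t t' x, x \in V u t -> x \in V u t' -> t = t')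
  (V_cam : forall u (i j : 'I_m) y, y \in V u j ->
             #|[set x in V u i | e x y]| = C i j)
  (* diameter D (this also encodes connectedness) *)
  (D : nat)
  (D_bound : forall u v, exists2 i, i <= D & v \in sphere e i u)
  (D_attained : exists u v, v \in sphere e D u)
  (S : nat -> {set 'I_m})
  (S_nonempty : forall i, i <= D -> S i != set0)
  (S_sphere : forall i u, i <= D ->
                sphere e i u = \bigcup_(t in S i) V u t)
  (star : forall u i x, i < D -> x \in sphere e i u ->
            exists y, y \in sphere e 1 x :&: sphere e i.+1 u) :
  forall i j : nat, 1 <= i -> i + j <= D -> cmax C S i <= bmax C S j.
Proof.
move=> i j i_gt0 ijD; apply/bigmax_leqP => l lSi.
have card_adj_sphere k v w l0 : k <= D -> w \in V v l0 ->
    #|[set x in sphere e k v | e x w]| = \sum_(t in S k) C t l0.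
  by move=> kD; rewrite S_sphere //; apply: card_adj_bigcup.
have iD : i <= D by rewrite (leq_trans _ ijD) ?leq_addr.
have jD : j < D by rewrite (leq_trans _ ijD) // -add1n leq_add2r.
have [v [_ _]] := D_attained.
have [w wl] := set0Pn _ (V_nonempty v l).
have wi : w \in sphere e i v by rewrite S_sphere //; apply/bigcupP; exists l.
have [u uij wwu] := walk_outward star ijD wi.
have /sphereP [wvw _] := wi.
have wj := sphere_of_walks e_sym uij wvw (walk_sym e_sym wwu).
have /bigcupP [l' l'Sj wl'] : w \in \bigcup_(t in S j) V u t by rewrite -S_sphere // ltnW.
apply: leq_trans (leq_bigmax_cond _ l'Sj).
rewrite -(card_adj_sphere _ _ _ _ (leq_trans (leq_pred i) iD) wl).
rewrite -(card_adj_sphere _ _ _ _ jD wl').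
apply/subset_leq_card/(subset_adj_sphere e_sym _ (walk_sym e_sym wwu)).
by rewrite addnS -addSn prednK.
Qed.
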